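(* Let $\mathbb{A}\in\mathbb{C}^{n\times n}$, $\mathbf{f}_1\in\mathbb{C}^n$, $\mathbf{f}_{i+1}=\mathbb{A}\mathbf{f}_i$. Let $z_1,\dots,z_\ell\in\mathbb{C}^n$ be linearly independent, $Z_\ell=(z_1,\dots,z_\ell)=QR$ a thin QR factorization ($Q\in\mathbb{C}^{n\times\ell}$ with orthonormal columns, $R\in\mathbb{C}^{\ell\times\ell}$ upper triangular nonsingular), and let $\lambda_1,\dots,\lambda_\ell\in\mathbb{C}$. For $i=1,\dots,m$ set $\mathbf{g}_i=Q^*\mathbf{f}_i$ and $\Delta_{\Lambda_i}=\operatorname{diag}(\lambda_1^{i-1},\dots,\lambda_\ell^{i-1})$ (with $\lambda^0=1$). Let $$\vec{\mathbf{g}}=\begin{pmatrix}\mathbf{g}_1\\ \vdots\\ \mathbf{g}_m\end{pmatrix},\quad S=\begin{pmatrix}R\Delta_{\Lambda_1}\\ \vdots\\ R\Delta_{\Lambda_m}\end{pmatrix},\quad \vec{\boldsymbol\alpha}_\star=\begin{pmatrix}\Delta_{\Lambda_1}\\ \vdots\\ \Delta_{\Lambda_m}\end{pmatrix}^{\dagger}(I_m\otimes R^{-1})\vec{\mathbf{g}}.$$ Let $M=I_m\otimes(RR^* )^{-1}$ and $\|x\|_M=\sqrt{x^*Mx}$. Then $\vec{\boldsymbol\alpha}_\star$ is the minimum $\|\cdot\|_2$-norm solution of the weighted least squares problem $\min_{\vec{\boldsymbol\alpha}\in\mathbb{C}^\ell}\|\vec{\mathbf{g}}-S\vec{\bolds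ymbol\alpha}\|_M$.
   Context: $\dagger$ denotes the Moore–Penrose pseudoinverse and $\otimes$ the Kronecker product. *)

(* Complex numbers: an arbitrary numClosedFieldType C
   (algebraically closed field with conjugation and order, e.g. algC, or
   complex R for a real-closed R). *)
From HB Require Import structures.
From mathcomp Require Import all_boot all_order all_algebra.
From mathcomp Require Import mxtens.
From Stdlib Require Import ClassicalEpsilon.
Set Implicit Arguments. Unset Strict Implicit. Unset Printing Implicit Defensive.
Import Order.TTheory GRing.Theory Num.Theory.
Local Open Scope ring_scope.

Section Defs.
Variable C : numClosedFieldType.

Definition ctmx {p q : nat} (A : 'M[C]_(p, q)) : 'M[C]_(q, p) :=
  (map_mx Num.conj A)^T.

(* Moore-Penrose conditions and the Moore-Penrose pseudoinverse
   (the unique matrix satisfying them, chosen by Hilbert's epsilon) *)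
Definition penrose {p q : nat} (A : 'M[C]_(p, q)) (X : 'M[C]_(q, p)) : Prop :=
  [/\ A *m X *m A = A, X *m A *m X = X,
      ctmx (A *m X) = A *m X & ctmx (X *m A) = X *m A].

Definition pinv {p q : nat} (A : 'M[C]_(p, q)) : 'M[C]_(q, p) :=
  epsilon (inhabits 0) (penrose A).

(* vertical block stacking  (B_0; B_1; ...; B_{k-1}),
   indexed consistently with the Kronecker product tensmx (A *t B) *)
Definition stackmx {k p q : nat} (B : 'I_k -> 'M[C]_(p, q)) : 'M[C]_(k * p, q) :=
  \matrix_(r, c) B (mxtens_unindex r).1 (mxtens_unindex r).2 c.

Definition wnorm {p : nat} (M : 'M[C]_p) (x : 'cV[C]_p) : C :=
  sqrtC ((ctmx x *m M *m x) 0 0).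

Definition norm2 {p : nat} (x : 'cV[C]_p) : C :=
  sqrtC ((ctmx x *m x) 0 0).

Definition min_norm_wls_sol {N p : nat} (M : 'M[C]_N) (S : 'M[C]_(N, p))
    (g : 'cV[C]_N) (a : 'cV[C]_p) : Prop :=
  (forall b : 'cV[C]_p, wnorm M (g - S *m a) <= wnorm M (g - S *m b)) /\
  (forall b : 'cV[C]_p,
      (forall c : 'cV[C]_p, wnorm M (g - S *m b) <= wnorm M (g - S *m c)) ->
      norm2 a <= norm2 b).

End Defs.

(* Put T := I_m (x) R and D := (Delta_1; ...; Delta_m), writing X^H for the
   conjugate transpose.  Then S = T D and g = T h with h := (I_m (x) R^-1) g,
   while T^H M T = I because R^H (R R^H)^-1 R = I.  Hence
   ||g - S a||_M = ||h - D a||_2 for every a, so the weighted problem is the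
   ordinary least squares problem for D, whose minimum-norm solution is D^+ h:
   the Penrose equations make h - D D^+ h orthogonal to the range of D, and
   D^+ h orthogonal to the kernel of D. *)

From HB Require Import structures.
From mathcomp Require Import all_boot all_order all_algebra.
From mathcomp Require Import mxtens.
From Stdlib Require Import ClassicalEpsilon.
Set Implicit Arguments. Unset Strict Implicit. Unset Printing Implicit Defensive.
Import Order.TTheory GRing.Theory Num.Theory.
Local Open Scope ring_scope.

Section ConjugateTranspose.
Variable C : numClosedFieldType.

Lemma ctmxK p q (A : 'M[C]_(p, q)) : ctmx (ctmx A) = A.
Proof. by apply/matrixP => i j; rewrite !mxE conjCK. Qed.

Lemma ctmxM p q r (A : 'M[C]_(p, q)) (B : 'M[C]_(q, r)) :
  ctmx (A *m B) = ctmx B *m ctmx A.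
Proof. by rewrite /ctmx map_mxM trmx_mul. Qed.

Lemma ctmxD p q (A B : 'M[C]_(p, q)) : ctmx (A + B) = ctmx A + ctmx B.
Proof. by rewrite /ctmx map_mxD linearD. Qed.

Lemma ctmxB p q (A B : 'M[C]_(p, q)) : ctmx (A - B) = ctmx A - ctmx B.
Proof. by rewrite /ctmx map_mxB linearB. Qed.

Lemma ctmx0 p q : ctmx (0 : 'M[C]_(p, q)) = 0.
Proof. by rewrite /ctmx map_mx0 trmx0. Qed.

Lemma ctmx1 p : ctmx (1%:M : 'M[C]_p) = 1%:M.
Proof. by rewrite /ctmx map_mx1 trmx1. Qed.

Lemma ctmx_tens p q r s (A : 'M[C]_(p, q)) (B : 'M[C]_(r, s)) :
  ctmx (A *t B) = ctmx A *t ctmx B.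
Proof. by rewrite /ctmx map_mxT trmx_tens. Qed.

Lemma unitmx_ctmx p (A : 'M[C]_p) : (ctmx A \in unitmx) = (A \in unitmx).
Proof. by rewrite /ctmx unitmx_tr map_unitmx. Qed.

Lemma ctmxV p (A : 'M[C]_p) : ctmx (invmx A) = invmx (ctmx A).
Proof. by rewrite /ctmx map_invmx trmx_inv. Qed.

Lemma ctmx_mulmx_ctmx p q (A : 'M[C]_(p, q)) :
  ctmx (A *m ctmx A) = A *m ctmx A.
Proof. by rewrite ctmxM ctmxK. Qed.

Lemma ctmx_gram_invK p (R : 'M[C]_p) :
  R \in unitmx -> ctmx R *m invmx (R *m ctmx R) *m R = 1%:M.
Proof.
move=> uR; have uRR : R *m ctmx R \in unitmx by rewrite unitmx_mul uR unitmx_ctmx.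
apply: (can_inj (mulKmx uR)).
by rewrite !mulmxA mulmxV // mul1mx mulmx1.
Qed.

End ConjugateTranspose.

Section SquaredNorm.
Variable C : numClosedFieldType.

Definition sqnorm2 p (x : 'cV[C]_p) : C := (ctmx x *m x) 0 0.

Lemma norm2E p (x : 'cV[C]_p) : norm2 x = sqrtC (sqnorm2 x).
Proof. by []. Qed.

Lemma sqnorm2E p (x : 'cV[C]_p) : sqnorm2 x = \sum_i x i 0 * (x i 0)^*.
Proof. by rewrite /sqnorm2 mxE; apply: eq_bigr => i _; rewrite !mxE mulrC. Qed.

Lemma sqnorm2_ge0 p (x : 'cV[C]_p) : 0 <= sqnorm2 x.
Proof. by rewrite sqnorm2E; apply: sumr_ge0 => i _; apply: mul_conjC_ge0. Qed.

Lemma sqnorm2_eq0 p (x : 'cV[C]_p) : sqnorm2 x = 0 -> x = 0.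
Proof.
rewrite sqnorm2E => /psumr_eq0P x0; apply/matrixP => i j; rewrite [j]ord1 mxE.
by apply/eqP; rewrite -mul_conjC_eq0 x0 // => k _; apply: mul_conjC_ge0.
Qed.

Lemma sqnorm2D_orth p (x y : 'cV[C]_p) :
  ctmx x *m y = 0 -> sqnorm2 (x + y) = sqnorm2 x + sqnorm2 y.
Proof.
move=> xy0; have yx0 : ctmx y *m x = 0 by rewrite -[x]ctmxK -ctmxM xy0 ctmx0.
by rewrite /sqnorm2 ctmxD mulmxDl !mulmxDr xy0 yx0 addr0 add0r mxE.
Qed.

Lemma mulmx_ctmx_eq0 p q (A : 'M[C]_(p, q)) : A *m ctmx A = 0 -> A = 0.
Proof.
move=> /matrixP AA0; apply/matrixP => i j; rewrite mxE.
have := AA0 i i; rewrite !mxE => AAii.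
have /psumr_eq0P Aik0 : \sum_k A i k * (A i k)^* = 0.
  by rewrite -[RHS]AAii; apply: eq_bigr => k _; rewrite !mxE.
by apply/eqP; rewrite -mul_conjC_eq0 Aik0 // => k _; apply: mul_conjC_ge0.
Qed.

Lemma row_free_mul_ctmx_unit p q (A : 'M[C]_(p, q)) :
  row_free A -> A *m ctmx A \in unitmx.
Proof.
move=> freeA; rewrite -row_free_unit -kermx_eq0.
set U := kermx _.
have : U *m A *m ctmx (U *m A) = 0.
  by rewrite ctmxM !mulmxA -(mulmxA U) mulmx_ker !mul0mx.
by move/mulmx_ctmx_eq0/eqP; rewrite mulmx_free_eq0.
Qed.

End SquaredNorm.

Section MoorePenrose.
Variable C : numClosedFieldType.

(* X = F^+ (G^H)^+ with F^+ = F^H (F F^H)^-1 and (G^H)^+ = (G G^H)^-1 G. *)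
Lemma penrose_full_rank p q r (G : 'M[C]_(r, p)) (F : 'M[C]_(r, q)) :
  row_free G -> row_free F ->
  penrose (ctmx G *m F)
    (ctmx F *m invmx (F *m ctmx F) *m invmx (G *m ctmx G) *m G).
Proof.
move=> freeG freeF.
have uF := row_free_mul_ctmx_unit freeF; have uG := row_free_mul_ctmx_unit freeG.
set KF := F *m ctmx F in uF *; set KG := G *m ctmx G in uG *.
have hermF : ctmx (invmx KF) = invmx KF by rewrite ctmxV ctmx_mulmx_ctmx.
have hermG : ctmx (invmx KG) = invmx KG by rewrite ctmxV ctmx_mulmx_ctmx.
set X := _ *m G.
have AX : ctmx G *m F *m X = ctmx G *m invmx KG *m G.
  by rewrite !mulmxA -(mulmxA _ F) -/KF -(mulmxA _ KF) mulmxV // mulmx1.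
have XA : X *m (ctmx G *m F) = ctmx F *m invmx KF *m F.
  by rewrite !mulmxA -(mulmxA _ G) -/KG -(mulmxA _ (invmx KG) KG) mulVmx // mulmx1.
split.
- by rewrite AX !mulmxA -(mulmxA _ G) -/KG -(mulmxA _ (invmx KG) KG) mulVmx // mulmx1.
- by rewrite XA !mulmxA -(mulmxA _ F) -/KF -(mulmxA _ KF) mulmxV // mulmx1.
- by rewrite AX !ctmxM ctmxK hermG mulmxA.
- by rewrite XA !ctmxM ctmxK hermF mulmxA.
Qed.

Lemma penrose_exists p q (A : 'M[C]_(p, q)) : exists X, penrose A X.
Proof.
have freeG : row_free (ctmx (col_base A)).
  by rewrite /row_free /ctmx mxrank_tr mxrank_map; apply: col_base_full.
have := penrose_full_rank freeG (row_base_free A).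
by rewrite ctmxK mulmx_base => penroseA; eexists; apply: penroseA.
Qed.

Lemma pinvP p q (A : 'M[C]_(p, q)) : penrose A (pinv A).
Proof. exact: epsilon_spec (penrose_exists A). Qed.

End MoorePenrose.

Section PenroseLeastSquares.
Variables (C : numClosedFieldType) (p q : nat).
Variables (D : 'M[C]_(p, q)) (X : 'M[C]_(q, p)) (h : 'cV[C]_p).
Hypothesis penroseDX : penrose D X.

Lemma penrose_residual_orth (v : 'cV[C]_q) :
  ctmx (h - D *m (X *m h)) *m (D *m v) = 0.
Proof.
have [DXD _ hermDX _] := penroseDX.
rewrite ctmxB (mulmxA D) ctmxM hermDX mulmxBl -!mulmxA.
by rewrite (mulmxA X) (mulmxA D) (mulmxA D X) DXD subrr.
Qed.

Lemma penrose_ker_orth (w : 'cV[C]_q) : D *m w = 0 -> ctmx (X *m h) *m w = 0.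
Proof.
have [_ XDX _ hermXD] := penroseDX => Dw0.
by rewrite -XDX -mulmxA ctmxM ctmxM hermXD -!mulmxA Dw0 !mulmx0.
Qed.

Lemma sqnorm2_residual b :
  sqnorm2 (h - D *m b) =
  sqnorm2 (h - D *m (X *m h)) + sqnorm2 (D *m (X *m h - b)).
Proof.
rewrite -sqnorm2D_orth ?penrose_residual_orth //.
by rewrite mulmxBr addrA subrK.
Qed.

Lemma penrose_lsq_min b : sqnorm2 (h - D *m (X *m h)) <= sqnorm2 (h - D *m b).
Proof. by rewrite (sqnorm2_residual b) lerDl sqnorm2_ge0. Qed.

Lemma penrose_lsq_min_norm b :
  (forall c, sqnorm2 (h - D *m b) <= sqnorm2 (h - D *m c)) ->
  sqnorm2 (X *m h) <= sqnorm2 b.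
Proof.
move=> /(_ (X *m h)); rewrite (sqnorm2_residual b) gerDl => Db_le0.
have Db : D *m (X *m h - b) = 0.
  by apply: sqnorm2_eq0; apply/eqP; rewrite eq_le Db_le0 sqnorm2_ge0.
have -> : b = X *m h - (X *m h - b) by rewrite opprB addrC subrK.
rewrite sqnorm2D_orth ?lerDl ?sqnorm2_ge0 //.
by rewrite mulmxN penrose_ker_orth ?oppr0.
Qed.

End PenroseLeastSquares.

Section WeightedLeastSquares.
Variable C : numClosedFieldType.

Lemma wnorm_isometry N p (M : 'M[C]_N) (T : 'M[C]_(N, p)) (x : 'cV[C]_p) :
  ctmx T *m M *m T = 1%:M -> wnorm M (T *m x) = norm2 x.
Proof.
move=> TMT; rewrite /wnorm ctmxM !mulmxA -(mulmxA _ (ctmx T)).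
by rewrite -(mulmxA _ (ctmx T *m M)) TMT mulmx1.
Qed.

Lemma min_norm_wls_sol_pinv N p q (M : 'M[C]_N) (T : 'M[C]_(N, p))
    (D : 'M[C]_(p, q)) (h : 'cV[C]_p) :
  ctmx T *m M *m T = 1%:M -> min_norm_wls_sol M (T *m D) (T *m h) (pinv D *m h).
Proof.
move=> TMT.
have residualE b : wnorm M (T *m h - T *m D *m b) = sqrtC (sqnorm2 (h - D *m b)).
  by rewrite -mulmxA -mulmxBr wnorm_isometry.
have le_sqrt k (x y : 'cV[C]_k) :
    (sqrtC (sqnorm2 x) <= sqrtC (sqnorm2 y)) = (sqnorm2 x <= sqnorm2 y).
  by rewrite ler_sqrtC ?nnegrE ?sqnorm2_ge0.
split=> [b | b minb].
  by rewrite !residualE le_sqrt; apply: penrose_lsq_min (pinvP D) b.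
rewrite !norm2E le_sqrt (penrose_lsq_min_norm (pinvP D)) // => c.
by rewrite -le_sqrt -!residualE.
Qed.

End WeightedLeastSquares.

Lemma tensmx11 (R : pzRingType) k p :
  (1%:M : 'M[R]_k) *t (1%:M : 'M[R]_p) = 1%:M.
Proof.
apply/matrixP => i j.
case: (mxtens_indexP i) => a b; case: (mxtens_indexP j) => c d.
by rewrite tensmxE !mxE (can_eq (@mxtens_indexK k p)) xpair_eqE -natrM mulnb.
Qed.

Lemma sum_mxtens_index (V : nmodType) k p (F : 'I_(k * p) -> V) :
  \sum_t F t = \sum_(a < k) \sum_(b < p) F (mxtens_index (a, b)).
Proof.
rewrite pair_big (reindex (@mxtens_index k p)) /=; last first.
  by exists (@mxtens_unindex k p) => t _; [apply: mxtens_indexK | apply: mxtens_unindexK].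
by apply: eq_big => // -[a b].
Qed.

Section Stack.
Variable C : numClosedFieldType.

Lemma stackmxE k p q (F : 'I_k -> 'M[C]_(p, q)) a b c :
  stackmx F (mxtens_index (a, b)) c = F a b c.
Proof. by rewrite mxE mxtens_indexK. Qed.

Lemma mul_tens1mx_stack k p r q (K : 'M[C]_(r, p)) (F : 'I_k -> 'M[C]_(p, q)) :
  (1%:M *t K) *m stackmx F = stackmx (fun i => K *m F i).
Proof.
apply/matrixP => i j; case: (mxtens_indexP i) => a b.
rewrite stackmxE !mxE sum_mxtens_index (bigD1 a) //= [X in _ + X]big1 ?addr0.
  by apply: eq_bigr => c _; rewrite tensmxE stackmxE mxE eqxx mul1r.
move=> a' a'a; apply: big1 => c _.
by rewrite tensmxE mxE eq_sym (negbTE a'a) !mul0r.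
Qed.

End Stack.

(* Indices are 0-based: f i = A^i f_1 is the paper's f_{i+1},
   Delta i = diag(lambda_j ^ i) is the paper's Delta_{Lambda_{i+1}}. *)
Theorem proposition5p1 (C : numClosedFieldType) (n l m : nat)
  (A : 'M[C]_n) (f1 : 'cV[C]_n)
  (Z Q : 'M[C]_(n, l)) (R : 'M[C]_l) (lambda : 'I_l -> C) :
  \rank Z = l ->
  Z = Q *m R ->
  ctmx Q *m Q = 1%:M ->
  (forall i j : 'I_l, (j < i)%N -> R i j = 0) ->
  R \in unitmx ->
  let f := fun i : 'I_m => A ^+ i *m f1 in
  let g := fun i : 'I_m => ctmx Q *m f i in
  let Delta := fun i : 'I_m => diag_mx (\row_(j < l) lambda j ^+ i) in
  let gvec := stackmx g in
  let S := stackmx (fun i : 'I_m => R *m Delta i) in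
  let alpha_star :=
    pinv (stackmx Delta) *m ((1%:M : 'M[C]_m) *t invmx R *m gvec) in
  let M := (1%:M : 'M[C]_m) *t invmx (R *m ctmx R) in
  min_norm_wls_sol M S gvec alpha_star.
Proof.
move=> _ _ _ _ uR f g Delta gvec S alpha_star M.
set T := (1%:M : 'M[C]_m) *t R.
have -> : S = T *m stackmx Delta by rewrite mul_tens1mx_stack.
have gvecE : gvec = T *m ((1%:M *t invmx R) *m gvec).
  by rewrite mulmxA tensmx_mul mulmx1 mulmxV // tensmx11 mul1mx.
rewrite {1}gvecE; apply: min_norm_wls_sol_pinv.
by rewrite ctmx_tens ctmx1 !tensmx_mul !mul1mx ctmx_gram_invK // tensmx11.
Qed.
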